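(* For Lebesgue almost every $x\in[0,1]$ and for every $i\in\mathbb{N}$, $$\limsup_{n\to\infty}N_i(x,n)<+\infty,$$ i.e. each symbol $i\in\mathbb{N}$ occurs only finitely many times among the $\bar O^1$-symbols of $x$.
   Context: Every irrational $x\in(0,1)$ has a unique representation ($\bar O^1$-expansion) $$x=\sum_{k=1}^\infty\frac{(-1)^{k-1}}{g_1(g_1+g_2)\cdots(g_1+g_2+\dots+g_k)},\qquad g_k=g_k(x)\in\mathbb{N}=\{1,2,3,\dots\}.$$ The $g_k(x)$ are the $\bar O^1$-symbols of $x$, and $N_i(x,n)$ is the number of indices $k\in\{1,\dots,n\}$ with $g_k(x)=i$. *)

From HB Require Import structures.
From mathcomp Require Import all_boot all_order all_algebra.
From mathcomp Require Import all_classical all_reals all_analysis.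
Set Implicit Arguments. Unset Strict Implicit. Unset Printing Implicit Defensive.
Import Order.TTheory GRing.Theory Num.Theory.
Import numFieldNormedType.Exports.
Local Open Scope classical_set_scope.
Local Open Scope ring_scope.

(* A candidate sequence of Obar^1-symbols is g : nat -> nat; only the values
   g 1, g 2, ... are used (paper's indexing, k >= 1). *)

Definition oterm (R : realType) (g : nat -> nat) (k : nat) : R :=
  (-1) ^+ k.-1 /
  (\prod_(1 <= j < k.+1) (\sum_(1 <= m < j.+1) g m)%N%:R).

Definition is_Oexp (R : realType) (x : R) (g : nat -> nat) : Prop :=
  (forall k, (0 < k)%N -> (0 < g k)%N) /\
  (fun n : nat => \sum_(1 <= k < n.+1) oterm R g k) @ \oo --> x.

Definition Ncount (g : nat -> nat) (i n : nat) : nat :=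
  count (fun k => g k == i) (iota 1 n).

From HB Require Import structures.
From mathcomp Require Import all_boot all_order all_algebra.
From mathcomp Require Import all_classical all_reals all_analysis.
From mathcomp Require Import ring lra.
Import Order.TTheory GRing.Theory Num.Theory.
Import numFieldNormedType.Exports.
Local Open Scope classical_set_scope.
Local Open Scope ring_scope.
Set Implicit Arguments. Unset Strict Implicit. Unset Printing Implicit Defensive.

(* Write s_j = g_1 + ... + g_j. The tail of the expansion after position j is an
   alternating sum lying in [1/(s_(j+1) + 1), 1/s_(j+1)], so once the first n
   symbols are fixed, the condition g_(n+1) = i confines x to an interval.
   Summing over the possible values of each of the first n symbols telescopes and
   halves the total length at each step, so the set of x with g_(n+1) = i has
   measure at most 2^-(n+1). These bounds are summable, hence by Borel-Cantelli
   almost no x has the symbol i infinitely often. *)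

Section alternating_tail.
Variables (R : realType) (s : nat -> nat).
Hypothesis s_incr : forall j, (s j < s j.+1)%N.

(* [alt_tail j N] = sum_(k = 1..N) (-1)^(k-1) / (s_(j+1) ... s_(j+k)), the tail of
   the expansion after position j, truncated to N terms and rescaled; see
   [alt_tail_recr]. *)
Fixpoint alt_tail (j N : nat) : R :=
  if N is N.+1 then (1 - alt_tail j.+1 N) / (s j.+1)%:R else 0.

Lemma s_gt0 j : (0 < s j.+1)%N.
Proof. exact: leq_ltn_trans (leq0n _) (s_incr j). Qed.

Lemma natr_s_gt0 j : 0 < (s j.+1)%:R :> R.
Proof. by rewrite ltr0n s_gt0. Qed.

Lemma prod_natr_s_neq0 a b : (0 < a)%N -> \prod_(a <= l < b) (s l)%:R != 0 :> R.
Proof.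
move=> a_gt0; rewrite prodf_seq_neq0; apply/allP => l; rewrite mem_index_iota.
case: l => [|l] /andP[al _]; first by rewrite leqn0 in al; rewrite (eqP al) in a_gt0.
exact: lt0r_neq0 (natr_s_gt0 l).
Qed.

Lemma alt_tail_recr N j : alt_tail j N.+1 =
  alt_tail j N + (-1) ^+ N / \prod_(j.+1 <= l < (j + N).+2) (s l)%:R.
Proof.
elim: N j => [|N IH] j; first by rewrite /= addn0 big_nat1 subr0 expr0 add0r.
have -> : alt_tail j N.+2 = (1 - alt_tail j.+1 N.+1) / (s j.+1)%:R by [].
rewrite IH.
have -> : alt_tail j N.+1 = (1 - alt_tail j.+1 N) / (s j.+1)%:R by [].
rewrite (big_ltn (_ : j.+1 < (j + N.+1).+2)%N); last by rewrite !ltnS leq_addr.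
have := natr_s_gt0 j; have := @prod_natr_s_neq0 j.+2 (j + N.+1).+2 isT.
rewrite addSnnS; set P := \prod_(_ <= _ < _) _ => P_neq0 s_gt0.
rewrite exprS; field; by rewrite P_neq0 lt0r_neq0.
Qed.

Lemma alt_tail_bounds N j : 0 <= alt_tail j N <= (s j.+1)%:R^-1.
Proof.
elim: N j => [|N IH] j /=; first by rewrite lexx invr_ge0 ler0n.
have /andP[y_ge0 y_le] := IH j.+1.
have le1 : (s j.+2)%:R^-1 <= 1 :> R by rewrite invf_le1 ?natr_s_gt0 // ler1n s_gt0.
have := natr_s_gt0 j; set a := (s j.+1)%:R => a_gt0.
apply/andP; split; first by apply: divr_ge0; lra.
rewrite ler_pdivrMr // mulVf ?gt_eqF //; lra.
Qed.

Lemma alt_tail_ge N j : (0 < N)%N -> (s j.+1).+1%:R^-1 <= alt_tail j N.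
Proof.
case: N => // N _ /=.
have /andP[y_ge0 y_le] := alt_tail_bounds N j.+1.
have := natr_s_gt0 j.
have : (s j.+2)%:R^-1 <= (s j.+1).+1%:R^-1 :> R.
  by rewrite lef_pV2 ?posrE ?ltr0n ?s_gt0 // ler_nat.
rewrite -natr1; set a := (s j.+1)%:R : R => le_inv a_gt0.
have -> : (a + 1)^-1 = (1 - (a + 1)^-1) / a.
  by field; rewrite lt0r_neq0 //= gt_eqF //; lra.
rewrite ler_pM2r ?invr_gt0 //; lra.
Qed.

End alternating_tail.

Definition symbol_sum (g : nat -> nat) (j : nat) : nat := (\sum_(1 <= m < j.+1) g m)%N.

Lemma symbol_sum0 g : symbol_sum g 0 = 0%N.
Proof. by rewrite /symbol_sum big_geq. Qed.

Lemma symbol_sumS g j : symbol_sum g j.+1 = (symbol_sum g j + g j.+1)%N.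
Proof. by rewrite /symbol_sum big_nat_recr. Qed.

Lemma symbol_sum_incr g : (forall k, (0 < k)%N -> (0 < g k)%N) ->
  forall j, (symbol_sum g j < symbol_sum g j.+1)%N.
Proof. by move=> g_gt0 j; rewrite symbol_sumS -{1}[symbol_sum g j]addn0 ltn_add2l g_gt0. Qed.

Lemma oterm_partial_sum (R : realType) g : (forall k, (0 < k)%N -> (0 < g k)%N) ->
  forall n, \sum_(1 <= k < n.+1) oterm R g k = alt_tail R (symbol_sum g) 0 n.
Proof.
move=> g_gt0; elim => [|n IH]; first by rewrite big_geq.
by rewrite big_nat_recr // IH (alt_tail_recr _ (symbol_sum_incr g_gt0)).
Qed.

Lemma nneseries_telescope_le (R : realType) (t : nat -> R) :
  (forall k, t k.+1 <= t k) -> (forall k, 0 <= t k) ->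
  (\sum_(k <oo) (t k - t k.+1)%:E <= (t 0%N)%:E)%E.
Proof.
move=> t_decr t_ge0; apply: lime_le.
  by apply: is_cvg_nneseries => n _ _; rewrite lee_fin subr_ge0.
apply: nearW => n; rewrite sumEFin lee_fin.
rewrite (@telescope_sumr_eq _ _ _ (fun k => - t k)) // => [|k _]; last by rewrite opprK addrC.
by rewrite opprK addrC lerBlDr lerDl.
Qed.

Definition segment (R : realType) (p q : R) : set R :=
  [set` `[Num.min p q, Num.max p q]].

Lemma lebesgue_measure_segment (R : realType) (p q : R) :
  lebesgue_measure (segment p q) = (`|p - q|)%:E.
Proof.
rewrite lebesgue_measure_itv /= !lte_fin -!EFinB.
case: (lerP p q) => [pq|qp]; last by rewrite qp.
case: ltP => // qp; suff -> : q = p by rewrite subrr.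
by apply/eqP; rewrite eq_le qp pq.
Qed.

Lemma segment_affine (R : realType) (c d u v y : R) : u <= y <= v ->
  segment (c + d * u) (c + d * v) (c + d * y).
Proof.
case/andP => uy yv; rewrite /segment /= in_itv /= ge_min le_max.
case: (lerP 0 d) => d0; apply/andP; split; apply/orP.
- by left; rewrite lerD2l; nra.
- by right; rewrite lerD2l; nra.
- by right; rewrite lerD2l; nra.
- by left; rewrite lerD2l; nra.
Qed.

Section hit_sets.
Variable R : realType.

(* The points c + d y, where y is the tail after a position with symbol sum a
   and the (n+1)-th symbol after that position is i; the k-th set of the union
   fixes the next symbol to k + 1. *)
Fixpoint hit_set (i n a : nat) (c d : R) : set R :=
  if n is n.+1 then
    \bigcup_k hit_set i n (a + k).+1 (c + d / (a + k).+1%:R) (- (d / (a + k).+1%:R))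
  else segment (c + d / (a + i).+1%:R) (c + d / (a + i)%:R).

Lemma hit_set_mem (s : nat -> nat) (i : nat) (x : R) :
  (forall j, (s j < s j.+1)%N) ->
  forall n j (c d : R), (fun N => c + d * alt_tail R s j N) @ \oo --> x ->
  s (j + n).+1 = (s (j + n) + i)%N -> hit_set i n (s j) c d x.
Proof.
move=> s_incr; elim => [|n IH] j c d cvg_x; rewrite ?addn0 => s_next /=.
  have near_seg : \forall N \near \oo,
      segment (c + d / (s j + i).+1%:R) (c + d / (s j + i)%:R) (c + d * alt_tail R s j N).
    near=> N; rewrite -s_next; apply: segment_affine.
    have /andP[_ ->] := alt_tail_bounds R s_incr N j.
    by rewrite andbT alt_tail_ge //; near: N; exists 1%N.
  apply: (closed_cvg _ _ near_seg _ cvg_x); exact: (@itv_closed _ R).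
exists (s j.+1 - s j).-1 => //.
have -> : (s j + (s j.+1 - s j).-1).+1 = s j.+1.
  by rewrite -addnS prednK ?subn_gt0 // subnKC // ltnW.
apply: IH; last by rewrite addSnnS.
have /funext <- : (fun N => c + d * alt_tail R s j N.+1) =1
    (fun N => c + d / (s j.+1)%:R + - (d / (s j.+1)%:R) * alt_tail R s j.+1 N).
  by move=> N /=; field; exact: lt0r_neq0 (natr_s_gt0 R s_incr j).
by move: cvg_x; rewrite -cvg_shiftS.
Unshelve. all: by end_near. Qed.

Lemma measurable_hit_set i n :
  forall a (c d : R), measurable (hit_set i n a c d).
Proof.
elim: n => [|n IH] a c d /=; first exact: measurable_itv.
by apply: bigcupT_measurable => k; exact: IH.
Qed.

Lemma hit_set0_measure_le i a (c d : R) : (0 < i)%N ->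
  (lebesgue_measure (hit_set i 0 a c d) <= (`|d| / (a.+1%:R * a.+2%:R))%:E)%E.
Proof.
move=> i_gt0; rewrite /= lebesgue_measure_segment lee_fin.
have a1_le : a.+1%:R <= (a + i)%:R :> R by rewrite ler_nat -addn1 leq_add2l.
have a1_gt0 : 0 < a.+1%:R :> R by rewrite ltr0n.
rewrite -[(a + i).+1%:R]natr1 -[a.+2%:R]natr1.
set A := (a + i)%:R : R in a1_le *; set B := a.+1%:R : R in a1_le a1_gt0 *.
have -> : c + d / (A + 1) - (c + d / A) = - (d / (A * (A + 1))).
  by field; apply/andP; split; apply: lt0r_neq0; lra.
rewrite normrN normrM normfV [`|A * (A + 1)|]ger0_norm; last by apply: mulr_ge0; lra.
apply: ler_wpM2l => //; rewrite lef_pV2 ?posrE; first (apply: ler_pM; lra).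
  by apply: mulr_gt0; lra.
by apply: mulr_gt0; lra.
Qed.

Lemma hit_set_measure_le i n : (0 < i)%N -> forall a (c d : R),
  (lebesgue_measure (hit_set i n a c d) <= (`|d| / 2 ^+ n / (a.+1%:R * a.+2%:R))%:E)%E.
Proof.
move=> i_gt0; elim: n => [|n IH] a c d; first by rewrite expr0 divr1 hit_set0_measure_le.
have := measure_sigma_subadditive lebesgue_measure (fun k => measurable_hit_set i n _ _ _)
  (measurable_hit_set i n.+1 a c d) (@subset_refl _ _).
move/le_trans; apply.
pose t k : R := `|d| / 2 ^+ n.+1 / ((a + k).+1%:R * (a + k).+2%:R).
have pow_gt0 : 0 < 2 ^+ n :> R by apply: exprn_gt0.
have t_ge0 k : 0 <= t k by rewrite /t !divr_ge0 ?mulr_ge0.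
apply: (@le_trans _ _ (\sum_(k <oo) (t k - t k.+1)%:E)%E).
  apply: lee_nneseries => [k _ _|k _]; first exact: measure_ge0.
  apply: le_trans (IH _ _ _) _; rewrite lee_fin le_eqVlt; apply/orP; left; apply/eqP.
  rewrite /t addnS normrN normrM normfV [`|(a + k).+1%:R|]ger0_norm // exprS -!natr1.
  have : 0 < (a + k)%:R + 1 :> R by rewrite natr1 ltr0n.
  set m := (a + k)%:R : R => m_gt0.
  by field; rewrite !lt0r_neq0 //; lra.
apply: le_trans (nneseries_telescope_le _ t_ge0) _.
- move=> k; rewrite /t addnS; apply: ler_wpM2l; first by rewrite !divr_ge0.
  by rewrite lef_pV2 ?posrE ?mulr_gt0 ?ltr0n // ler_pM // ?ler0n // ler_nat.
by rewrite /t addn0.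
Qed.

Definition late_hit_set i M : set R := \bigcup_k hit_set i (M + k) 0 0 1.

Definition hit_often_set i : set R := \bigcap_M late_hit_set i M.

Lemma measurable_late_hit_set i M : measurable (late_hit_set i M).
Proof. by apply: bigcupT_measurable => k; exact: measurable_hit_set. Qed.

Lemma measurable_hit_often_set i : measurable (hit_often_set i).
Proof. by apply: bigcapT_measurable => M; exact: measurable_late_hit_set. Qed.

Lemma late_hit_set_measure_le i M : (0 < i)%N ->
  (lebesgue_measure (late_hit_set i M) <= ((2 ^+ M)^-1)%:E)%E.
Proof.
move=> i_gt0.
have := measure_sigma_subadditive lebesgue_measure
  (fun k => measurable_hit_set i (M + k) 0 0 1) (measurable_late_hit_set i M)
  (@subset_refl _ _).
move/le_trans; apply.
apply: le_trans (epsilon_trick0 xpredT (_ : 0 <= (2 ^+ M)^-1)) => //.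
apply: lee_nneseries => [k _ _|k _]; first exact: measure_ge0.
apply: le_trans (hit_set_measure_le _ _ _ _ _) _ => //.
rewrite lee_fin le_eqVlt; apply/orP; left; apply/eqP.
have pow_neq0 (m : nat) : 2 ^+ m != 0 :> R by rewrite expf_neq0.
by rewrite normr1 natrX exprD exprS; field; rewrite !pow_neq0.
Qed.

Lemma hit_often_set_null i : (0 < i)%N ->
  lebesgue_measure (hit_often_set i) = 0%E.
Proof.
move=> i_gt0; apply/eqP; rewrite eq_le measure_ge0 andbT.
apply/lee_addgt0Pr => e e_gt0; rewrite add0e.
have : 0 <= e^-1 by rewrite invr_ge0 ltW.
move/archi_boundP; set M := Num.bound _ => inve_lt.
apply: (le_trans (le_measure _ _ _ _));
  last apply: (le_trans (late_hit_set_measure_le M i_gt0)).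
- by rewrite inE; exact: measurable_hit_often_set.
- by rewrite inE; exact: measurable_late_hit_set.
- exact: bigcap_inf.
rewrite lee_fin -[e]invrK lef_pV2 ?posrE ?invr_gt0 ?exprn_gt0 //.
by apply/ltW/(lt_le_trans inve_lt); rewrite -natrX ler_nat ltnW // ltn_expl.
Qed.

Lemma Oexp_hit_often (x : R) g i : is_Oexp x g ->
  (forall M, exists2 n, (M <= n)%N & g n.+1 = i) -> hit_often_set i x.
Proof.
move=> [g_gt0 cvg_x] often M _; have [n Mn g_next] := often M.
exists (n - M)%N => //; rewrite subnKC // -(symbol_sum0 g).
apply: (hit_set_mem (symbol_sum_incr g_gt0) (j := 0)); last by rewrite symbol_sumS g_next.
have /funext <- : (fun N => \sum_(1 <= k < N.+1) oterm R g k) =1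
    (fun N => 0 + 1 * alt_tail R (symbol_sum g) 0 N).
  by move=> N; rewrite oterm_partial_sum // add0r mul1r.
exact: cvg_x.
Qed.

End hit_sets.

Lemma NcountS g i n : Ncount g i n.+1 = (Ncount g i n + (g n.+1 == i))%N.
Proof.
rewrite /Ncount; have -> : iota 1 n.+1 = iota 1 n ++ [:: n.+1].
  by rewrite -(addn1 n) iotaD addnC.
by rewrite count_cat /= addn0.
Qed.

Lemma Ncount_le g i M : (forall n, (M <= n)%N -> g n.+1 != i) ->
  forall n, (Ncount g i n <= M)%N.
Proof.
move=> not_i; elim => [//|n IH]; rewrite NcountS; case: (leqP M n) => [Mn|nM].
  by rewrite (negbTE (not_i n Mn)) addn0.
have count_le : (Ncount g i n <= n)%N by rewrite -[n in (_ <= n)%N](size_iota 1) count_size.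
by rewrite (leq_trans _ nM) // -addn1 leq_add ?leq_b1.
Qed.

Lemma limn_esup_lty (R : realType) (u : nat -> \bar R) (K : R) :
  (forall n, (u n <= K%:E)%E) -> (limn_esup u < +oo)%E.
Proof.
move=> u_le; rewrite limn_esup_lim; apply: le_lt_trans (ltry K).
apply: lime_le; first exact: is_cvg_esups.
by apply: nearW => n; apply: ge_ereal_sup => _ [m _ <-].
Qed.

Theorem theorem6 (R : realType) :
  {ae (@lebesgue_measure R), forall x : R,
     x \in `[0, 1] ->
     forall g : nat -> nat, is_Oexp x g ->
     forall i : nat, (0 < i)%N ->
       (limn_esup (fun n : nat => ((Ncount g i n)%:R : R)%:E) < +oo)%E}.
Proof.
have null : (@lebesgue_measure R).-negligible (\bigcup_i hit_often_set i.+1).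
  apply: negligible_bigcup => i; apply/negligibleP; first exact: measurable_hit_often_set.
  exact: hit_often_set_null.
apply: negligibleS null => x /= not_bounded; apply: contrapT => not_often.
apply: not_bounded => _ g g_Oexp [//|i] _.
have [[M not_i]|often] := pselect (exists M, forall n, (M <= n)%N -> g n.+1 != i.+1).
  by apply: (limn_esup_lty (K := M%:R)) => n; rewrite lee_fin ler_nat Ncount_le.
exfalso; apply: not_often; exists i => //; apply: Oexp_hit_often g_Oexp _ => M.
apply: contrapT => never; apply: often; exists M => n Mn; apply/eqP => g_next.
by apply: never; exists n.
Qed.
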